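(* Let $\mathbb{R}^n$ be equipped with an arbitrary norm $\|\cdot\|$, let $g:\mathbb{R}^n\to\mathbb{R}^n$, $y\in\mathbb{R}^n$, $\rho>0$, $L\ge0$, $\mu>0$, and $B=\{x\in\mathbb{R}^n:\|x\|\le\rho\}$. Assume $g(0)=0$, $g$ is differentiable in $B$ with $\|g'(x^a)-g'(x^b)\|\le L\|x^a-x^b\|$ for all $x^a,x^b\in B$, that for every $x\in B$ the matrix $g'(x)$ is invertible with $\|g'(x)^{-1}\|\le \frac1\mu$, and that $\|y\|<\mu\rho$. Then there exists a solution $x^*$ of $g(x)=y$ with $\|x^*\|\le\frac{\|y\|}{\mu}$.
   Context: Matrix norms are operator norms subordinate to the chosen vector norm. *)

From HB Require Import structures.
From mathcomp Require Import all_boot all_order all_algebra.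
From mathcomp Require Import boolp classical_sets reals.
Set Implicit Arguments. Unset Strict Implicit. Unset Printing Implicit Defensive.
Import Order.TTheory GRing.Theory Num.Theory.
Local Open Scope ring_scope.
Local Open Scope classical_set_scope.

Definition is_vnorm (R : realType) (n : nat) (N : 'cV[R]_n -> R) : Prop :=
  (forall x, N x = 0 -> x = 0) /\
  (forall (a : R) x, N (a *: x) = `|a| * N x) /\
  (forall x y, N (x + y) <= N x + N y).

Definition opnorm (R : realType) (n : nat) (N : 'cV[R]_n -> R) (A : 'M[R]_n) : R :=
  sup [set N (A *m x) | x in [set x : 'cV[R]_n | N x <= 1]].

Definition has_deriv (R : realType) (n : nat) (N : 'cV[R]_n -> R)
  (g : 'cV[R]_n -> 'cV[R]_n) (x : 'cV[R]_n) (D : 'M[R]_n) : Prop :=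
  forall eps : R, 0 < eps -> exists2 delta : R, 0 < delta &
    forall h : 'cV[R]_n, N h < delta ->
      N (g (x + h) - g x - D *m h) <= eps * N h.

From HB Require Import structures.
From mathcomp Require Import all_boot all_order all_algebra.
From mathcomp Require Import boolp classical_sets reals topology normedtype derive.
From mathcomp Require Import ring lra.
Set Implicit Arguments. Unset Strict Implicit. Unset Printing Implicit Defensive.
Import Order.TTheory GRing.Theory Num.Theory.
Import numFieldNormedType.Exports.
Local Open Scope ring_scope.
Local Open Scope classical_set_scope.

(* For nu < mu, minimise the merit function x |-> N (g x - y) + nu * N x over the
   closed ball of radius rho.  Comparing with x = 0 gives nu * N x <= N y < nu * rho
   at a minimiser x, so x is interior.  If g x <> y, the Newton step
   x - t * Dg(x)^-1 (g x - y) multiplies the residual by 1 - t up to o(t) while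
   increasing the penalty by at most t * (nu / mu) * N (g x - y), so the merit
   strictly decreases: a contradiction.  This gives solutions with
   nu * N x <= N y for every nu < mu, and a last compactness argument lets nu
   tend to mu.  Compactness and
   continuity come from the equivalence of N with the max norm of 'cV. *)

Section mx_norm_facts.
Variable R : realType.

Lemma mx_norm_entry_le m k (A : 'M[R]_(m, k)) i j : `|A i j| <= `|A|.
Proof.
rewrite [leRHS]/Num.norm /= mx_normrE.
exact: (le_bigmax _ (fun ij : 'I_m * 'I_k => `|A ij.1 ij.2|) (i, j)).
Qed.

Lemma mx_norm_le_entries m k (A : 'M[R]_(m, k)) b :
  0 <= b -> (forall i j, `|A i j| <= b) -> `|A| <= b.
Proof.
move=> b0 hA; rewrite [leLHS]/Num.norm /= mx_normrE.
by apply: bigmax_le => // ij _; apply: hA.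
Qed.

Lemma mx_norm_trmx m k (A : 'M[R]_(m, k)) : `|A^T| = `|A|.
Proof.
apply/le_anti/andP; split; apply: mx_norm_le_entries => // i j.
  by rewrite mxE; apply: mx_norm_entry_le.
by have := mx_norm_entry_le A^T j i; rewrite mxE.
Qed.

Lemma mx_norm_mulmx_le m p k (A : 'M[R]_(m, p)) (B : 'M[R]_(p, k)) :
  `|A *m B| <= p%:R * `|A| * `|B|.
Proof.
apply: mx_norm_le_entries => [|i j]; first by rewrite !mulr_ge0 ?ler0n.
rewrite mxE; apply: le_trans (ler_norm_sum _ _ _) _.
apply: le_trans (_ : \sum_(l < p) `|A| * `|B| <= _); last first.
  by rewrite sumr_const card_ord mulr_natl mulrnAl.
by apply: ler_sum => l _; rewrite normrM ler_pM ?mx_norm_entry_le.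
Qed.

Lemma trmx_continuous m k : continuous (@trmx R m k).
Proof.
move=> A; apply/(@cvgrPdist_lt _ _ _ _ (nbhs_filter A)) => e e0.
apply/(@nbhs_normP _ 'M[R]_(m, k)).
by exists e => //= B; rewrite -linearB /= mx_norm_trmx.
Qed.

Lemma cV_bounded_closed_compact k (A : set 'cV[R]_k) :
  bounded_set A -> closed A -> compact A.
Proof.
move=> bA cA.
have -> : A = trmx @` [set u : 'rV[R]_k | A u^T].
  apply/seteqP; split => [x Ax | _ [u Au <-] //].
  by exists x^T; rewrite /= trmxK.
apply: continuous_compact; first exact/continuous_subspaceT/trmx_continuous.
apply: bounded_closed_compact.
  case: bA => M [Mreal hM]; exists M; split => // r hr u Au.
  by rewrite /= -mx_norm_trmx; apply: hM.
by apply: preimage_closed => // u _; apply: trmx_continuous.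
Qed.

End mx_norm_facts.

Section vector_norm.
Variables (R : realType) (n : nat) (N : 'cV[R]_n -> R).
Hypothesis normN : is_vnorm N.

Lemma normv_eq0 x : N x = 0 -> x = 0.
Proof. by case: normN => + _; apply. Qed.

Lemma normvZ a x : N (a *: x) = `|a| * N x.
Proof. by case: normN => _ [-> _]. Qed.

Lemma normvD x z : N (x + z) <= N x + N z.
Proof. by case: normN => _ [_ ->]. Qed.

Lemma normv0 : N 0 = 0.
Proof. by rewrite -(scale0r (0 : 'cV_n)) normvZ normr0 mul0r. Qed.

Lemma normvN x : N (- x) = N x.
Proof. by rewrite -scaleN1r normvZ normrN normr1 mul1r. Qed.

Lemma normv_ge0 x : 0 <= N x.
Proof. by have := normvD x (- x); rewrite subrr normv0 normvN; lra. Qed.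

Lemma normv_gt0 x : x != 0 -> 0 < N x.
Proof.
move=> x0; rewrite lt_def normv_ge0 andbT.
by apply: contra_neq x0; apply: normv_eq0.
Qed.

Lemma normv_dist x z : `|N x - N z| <= N (x - z).
Proof.
have := normvD (x - z) z; have := normvD (z - x) x.
by rewrite !subrK -opprB normvN ler_norml; lra.
Qed.

Lemma normv_sum I (r : seq I) (P : pred I) (f : I -> 'cV[R]_n) :
  N (\sum_(i <- r | P i) f i) <= \sum_(i <- r | P i) N (f i).
Proof.
elim/big_rec2: _ => [|i a b _ hab]; first by rewrite normv0.
by apply: le_trans (normvD _ _) _; rewrite lerD2l.
Qed.

Lemma normv_le_mx_norm : exists2 C, 0 < C & forall x, N x <= C * `|x|.
Proof.
exists (\sum_(i < n) N (delta_mx i 0) + 1) => [|x].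
  by rewrite ltr_wpDl ?sumr_ge0 // => i _; apply: normv_ge0.
rewrite mulrDl mul1r ler_wpDr ?normr_ge0 // mulr_suml.
rewrite {1}(matrix_sum_delta x).
under eq_bigr do rewrite big_ord1.
apply: le_trans (normv_sum _ _ _) _; apply: ler_sum => i _.
by rewrite normvZ mulrC ler_wpM2l ?normv_ge0 ?mx_norm_entry_le.
Qed.

Lemma nbhs_normv x (P : set 'cV[R]_n) d :
  0 < d -> (forall z, N (z - x) < d -> P z) -> nbhs x P.
Proof.
move=> d0 hP; have [C C0 hC] := normv_le_mx_norm.
apply/(@nbhs_normP _ 'cV[R]_n); exists (d / C) => [|z /= hz].
  by rewrite /= divr_gt0.
apply: hP; apply: le_lt_trans (hC _) _.
by rewrite -normrN opprB mulrC -ltr_pdivlMr.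
Qed.

Lemma continuous_normv : continuous N.
Proof.
move=> x; apply/(@cvgrPdist_lt _ _ _ _ (nbhs_filter x)) => e e0.
apply: (nbhs_normv e0) => z hz; apply: le_lt_trans hz.
by rewrite distrC normv_dist.
Qed.

Lemma mx_norm_le_normv : exists2 c, 0 < c & forall x, c * `|x| <= N x.
Proof.
pose S := [set x : 'cV[R]_n | `|x| = 1].
have [S0|S_empty] := pselect (S !=set0); last first.
  exists 1 => // x; suff -> : x = 0 by rewrite normr0 mulr0 normv0.
  have [//|x0] := eqVneq x 0; rewrite -normr_eq0 in x0.
  case: S_empty; exists (`|x|^-1 *: x).
  by rewrite /S /= normrZ normfV normr_id mulVf.
have cS : compact S.
  apply: cV_bounded_closed_compact.
    by exists 1; split => // r r1 x /= ->; apply: ltW.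
  apply: (@preimage_closed _ _ (fun x : 'cV[R]_n => `|x|) [set r | r = 1]).
    by move=> x _; apply: norm_continuous.
  exact: closed_eq.
have [xm Sxm xm_min] := compact_EVT_min S0 cS
  (continuous_subspaceT continuous_normv).
move: Sxm; rewrite inE /S /= => xm1.
have xm0 : xm != 0 by rewrite -normr_eq0 xm1 oner_neq0.
exists (N xm) => [|x]; first exact: normv_gt0.
have [->|x_neq0] := eqVneq x 0; first by rewrite normr0 mulr0 normv_ge0.
have nx0 : 0 < `|x| by rewrite normr_gt0.
have := xm_min (`|x|^-1 *: x); rewrite normvZ normfV normr_id mulrC ler_pdivlMr //.
by apply; rewrite inE /S /= normrZ normfV normr_id mulVf // gt_eqF.
Qed.

Lemma compact_normv_ball r : compact [set x | N x <= r].
Proof.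
have [c c0 hc] := mx_norm_le_normv.
apply: cV_bounded_closed_compact.
  exists (r / c); split => [|M hM x /= hx]; first exact: num_real.
  by apply: le_trans (ltW hM); rewrite ler_pdivlMr // mulrC (le_trans (hc x)).
apply: (@preimage_closed _ _ N [set s | s <= r]) => [x _|]; last exact: closed_le.
exact: continuous_normv.
Qed.

Lemma continuous_at_normv (f : 'cV[R]_n -> 'cV[R]_n) x :
  (forall e, 0 < e -> exists2 d, 0 < d &
     forall z, N (z - x) < d -> N (f z - f x) < e) ->
  {for x, continuous f}.
Proof.
move=> hf; have [c c0 hc] := mx_norm_le_normv.
apply/(@cvgrPdist_lt _ _ _ _ (nbhs_filter x)) => e e0.
have [d d0 hd] := hf (c * e) (mulr_gt0 c0 e0).
apply: (nbhs_normv d0) => z /hd hz; rewrite distrC -(ltr_pM2l c0).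
exact: le_lt_trans (hc _) hz.
Qed.

Lemma opnorm_mulmx_le (A : 'M[R]_n) v : N (A *m v) <= opnorm N A * N v.
Proof.
have [c c0 hc] := mx_norm_le_normv; have [C C0 hC] := normv_le_mx_norm.
(* Without an upper bound, [sup] would return a junk value. *)
have supA : has_sup [set N (A *m x) | x in [set x | N x <= 1]].
  split; first by exists (N (A *m 0)), 0; rewrite //= normv0.
  exists (C * (n%:R * `|A| / c)) => _ [x /= x1 <-].
  apply: le_trans (hC _) _; apply: ler_wpM2l; first exact: ltW.
  apply: le_trans (mx_norm_mulmx_le _ _) _.
  apply: ler_wpM2l; first by rewrite mulr_ge0 ?ler0n.
  by rewrite -[c^-1]mul1r ler_pdivlMr // mulrC (le_trans (hc x)).
have [->|v0] := eqVneq v 0; first by rewrite mulmx0 normv0 mulr0.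
have Nv0 := normv_gt0 v0.
have normv_inv : `|(N v)^-1| = (N v)^-1 by rewrite ger0_norm // invr_ge0 ltW.
have u1 : [set x | N x <= 1] ((N v)^-1 *: v).
  by rewrite /= normvZ normv_inv mulVf // gt_eqF.
have := sup_upper_bound supA (imageP (fun x => N (A *m x)) u1).
by rewrite -scalemxAr normvZ normv_inv mulrC ler_pdivrMr.
Qed.

Lemma has_deriv_continuous (f : 'cV[R]_n -> 'cV[R]_n) x D :
  has_deriv N f x D -> {for x, continuous f}.
Proof.
move=> fD; apply: continuous_at_normv => e e0.
have [d d0 hd] := fD 1 ltr01.
have K0 : 0 < 1 + `|opnorm N D| by rewrite ltr_pwDl.
exists (Num.min d (e / (1 + `|opnorm N D|))) => [|z].
  by rewrite lt_min d0 divr_gt0.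
rewrite lt_min ltr_pdivlMr // => /andP[zd ze].
have := hd _ zd; rewrite mul1r [x + _]addrC subrK => herr.
have hDz : N (D *m (z - x)) <= `|opnorm N D| * N (z - x).
  apply: le_trans (opnorm_mulmx_le _ _) _.
  by rewrite ler_wpM2r ?normv_ge0 ?ler_norm.
have := normvD (f z - f x - D *m (z - x)) (D *m (z - x)); rewrite subrK.
lra.
Qed.

Lemma continuous_within_residual (f : 'cV[R]_n -> 'cV[R]_n) y (k : R -> R)
    (B : set 'cV[R]_n) :
  (forall x, B x -> {for x, continuous f}) -> continuous k ->
  {within B, continuous (fun x => N (f x - y) + k (N x))}.
Proof.
move=> fB kc; apply: continuous_in_subspaceT => x; rewrite inE => /fB fx.
have res_x : {for x, continuous (fun z => N (f z - y))}.
  apply: continuous_comp; [exact: cvgB fx (cvg_cst y) | exact: continuous_normv].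
have kN_x : {for x, continuous (fun z => k (N z))}.
  apply: continuous_comp; [exact: continuous_normv | exact: kc].
by apply: cvgD; [exact: nbhs_filter | exact: res_x | exact: kN_x].
Qed.

End vector_norm.

Lemma compact_approx_le0 (T : topologicalType) (R : realType) (K : set T)
    (h : T -> R) :
  compact K -> {within K, continuous h} ->
  (forall e, 0 < e -> exists2 x, K x & h x <= e) -> exists2 x, K x & h x <= 0.
Proof.
move=> cK ch happrox.
have K0 : K !=set0 by have [x Kx _] := happrox 1 ltr01; exists x.
have [x Kx x_min] := compact_EVT_min K0 cK ch.
exists x; first by rewrite -inE.
apply/ler_addgt0Pr => e e0; have [z Kz hz] := happrox e e0.
by rewrite add0r (le_trans (x_min z _)) ?inE.
Qed.

Lemma newton_step_residual (R : realType) (n : nat) (N : 'cV[R]_n -> R)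
    (g : 'cV[R]_n -> 'cV[R]_n) (y z : 'cV[R]_n) (D : 'M[R]_n) (eps : R) :
  is_vnorm N -> has_deriv N g z D -> D \in unitmx -> 0 < eps ->
  let v := invmx D *m (g z - y) in
  exists2 dl, 0 < dl & forall t, 0 < t -> t <= 1 -> t * N v < dl ->
    N (g (z - t *: v) - y) <= (1 - t) * N (g z - y) + eps * (t * N v).
Proof.
move=> normN gD Dunit eps0 v.
have [dl dl0 hdl] := gD eps eps0.
exists dl => // t t0 t1 tv.
have Ntv : N (- (t *: v)) = t * N v by rewrite normvN // normvZ // gtr0_norm.
have := hdl (- (t *: v)); rewrite Ntv => /(_ tv) herr.
have Dtv : D *m (- (t *: v)) = - (t *: (g z - y)).
  by rewrite mulmxN -scalemxAr mulKVmx.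
have -> : g (z - t *: v) - y =
    (g (z - t *: v) - g z - D *m (- (t *: v))) + (1 - t) *: (g z - y).
  by rewrite Dtv; apply/matrixP => i j; rewrite !mxE; ring.
apply: le_trans (normvD normN _ _) _; rewrite normvZ // ger0_norm ?subr_ge0 //.
by rewrite addrC lerD2l.
Qed.

Lemma newton_step_decrease (R : realType) (n : nat) (N : 'cV[R]_n -> R)
    (g : 'cV[R]_n -> 'cV[R]_n) (y z : 'cV[R]_n) (D : 'M[R]_n) (mu nu : R) :
  is_vnorm N -> 0 <= nu -> nu < mu ->
  has_deriv N g z D -> D \in unitmx -> opnorm N (invmx D) <= 1 / mu ->
  g z != y -> forall r, 0 < r -> exists2 w, N (w - z) < r &
    N (g w - y) + nu * N w < N (g z - y) + nu * N z.
Proof.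
move=> normN nu0 nu_mu gD Dunit Dinv gzy r r0.
have mu0 : 0 < mu by apply: le_lt_trans nu_mu.
have res0 : 0 < N (g z - y) by rewrite normv_gt0 // subr_eq0.
have eps0 : 0 < (mu - nu) / 2 by rewrite divr_gt0 // subr_gt0.
have [dl dl0] := newton_step_residual y normN gD Dunit eps0.
set v := invmx D *m (g z - y) => hdl.
have Nv : N v * mu <= N (g z - y).
  rewrite -ler_pdivlMr //; apply: le_trans (opnorm_mulmx_le normN _ _) _.
  by rewrite mulrC ler_wpM2l ?normv_ge0 // -div1r.
have Nv_lt : N v * (mu + nu) < 2 * N (g z - y).
  rewrite -(ltr_pM2l mu0).
  have : N v * mu * (mu + nu) <= N (g z - y) * (mu + nu).
    by apply: ler_wpM2r => //; lra.
  have : N (g z - y) * (mu + nu) < N (g z - y) * (2 * mu).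
    by rewrite ltr_pM2l //; lra.
  lra.
pose m := Num.min dl r.
have m_dl : m <= dl by rewrite ge_min lexx.
have m_r : m <= r by rewrite ge_min lexx orbT.
have Nv1 : 0 < N v + 1 by rewrite ltr_wpDl ?normv_ge0.
pose t := Num.min 1 (m / (N v + 1)).
have t0 : 0 < t by rewrite lt_min ltr01 divr_gt0 // lt_min dl0.
have t1 : t <= 1 by rewrite ge_min lexx.
have tv : t * N v < m.
  have : t * (N v + 1) <= m by rewrite -ler_pdivlMr // ge_min lexx orbT.
  lra.
exists (z - t *: v).
  rewrite addrAC subrr add0r normvN // normvZ // gtr0_norm //.
  exact: lt_le_trans tv m_r.
have := hdl t t0 t1 (lt_le_trans tv m_dl).
have : nu * N (z - t *: v) <= nu * (N z + t * N v).
  apply: ler_wpM2l => //.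
  by have := normvD normN z (- (t *: v)); rewrite normvN // normvZ // gtr0_norm.
have : t * (N v * (mu + nu)) < t * (2 * N (g z - y)) by rewrite ltr_pM2l.
lra.
Qed.

Lemma exists_solution_slack (R : realType) (n : nat) (N : 'cV[R]_n -> R)
    (g : 'cV[R]_n -> 'cV[R]_n) (Dg : 'cV[R]_n -> 'M[R]_n) (y : 'cV[R]_n)
    (rho mu nu : R) :
  is_vnorm N -> 0 <= nu -> nu < mu -> g 0 = 0 ->
  (forall x, N x <= rho -> has_deriv N g x (Dg x)) ->
  (forall x, N x <= rho ->
     Dg x \in unitmx /\ opnorm N (invmx (Dg x)) <= 1 / mu) ->
  N y < nu * rho ->
  exists x, g x = y /\ nu * N x <= N y.
Proof.
move=> normN nu0 nu_mu g0 gD Dg_inv y_rho.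
pose B := [set x | N x <= rho].
have rho0 : 0 <= rho by have := normv_ge0 normN y; nra.
have phi_cont : {within B, continuous (fun x => N (g x - y) + nu * N x)}.
  apply: (continuous_within_residual normN (k := *%R nu)) => [x Bx|].
    by have := has_deriv_continuous normN (gD x Bx); apply.
  exact: mulrl_continuous.
have B_0 : B 0 by rewrite /B /= normv0.
have [x Bx x_min] := compact_EVT_min (ex_intro _ 0 B_0)
  (compact_normv_ball normN (r := rho)) phi_cont.
move: Bx; rewrite inE => Bx.
have phix : N (g x - y) + nu * N x <= N y.
  have := x_min 0 (mem_set B_0).
  by rewrite g0 sub0r normvN // normv0 // mulr0 addr0.
exists x; split; last by have := normv_ge0 normN (g x - y); lra.
apply/eqP/negPn/negP => gxy.
have x_rho : 0 < rho - N x by have := normv_ge0 normN (g x - y); nra.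
have [uDx invDx] := Dg_inv x Bx.
have [w wx phiw] :=
  newton_step_decrease normN nu0 nu_mu (gD x Bx) uDx invDx gxy x_rho.
have Bw : B w by have := normvD normN (w - x) x; rewrite subrK /B /=; lra.
by have := x_min w (mem_set Bw); lra.
Qed.

Lemma exists_solution_approx (R : realType) (n : nat) (N : 'cV[R]_n -> R)
    (g : 'cV[R]_n -> 'cV[R]_n) (Dg : 'cV[R]_n -> 'M[R]_n) (y : 'cV[R]_n)
    (rho mu e : R) :
  is_vnorm N -> 0 < rho -> g 0 = 0 ->
  (forall x, N x <= rho -> has_deriv N g x (Dg x)) ->
  (forall x, N x <= rho ->
     Dg x \in unitmx /\ opnorm N (invmx (Dg x)) <= 1 / mu) ->
  N y < mu * rho -> 0 < e ->
  exists x, [/\ g x = y, N x <= rho & mu * N x <= N y + e].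
Proof.
move=> normN rho0 g0 gD Dg_inv y_rho e0.
have y_rho' : N y / rho < mu by rewrite ltr_pdivrMr // mulrC.
have Ny0 : 0 <= N y / rho by rewrite divr_ge0 ?normv_ge0 ?ltW.
have e_rho : 0 < e / rho by rewrite divr_gt0.
pose nu := Num.max (mu - e / rho) ((N y / rho + mu) / 2).
have nu_ge1 : mu - e / rho <= nu by rewrite le_max lexx.
have nu_ge2 : (N y / rho + mu) / 2 <= nu by rewrite le_max lexx orbT.
have nu_mu : nu < mu by rewrite gt_max; apply/andP; split; lra.
have nu_y : N y < nu * rho by rewrite -ltr_pdivrMr //; lra.
have nu0 : 0 <= nu by lra.
have [x [gx nux]] := exists_solution_slack normN nu0 nu_mu g0 gD Dg_inv nu_y.
have x_rho : N x <= rho by have := normv_ge0 normN x; nra.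
have mu_nu : (mu - nu) * rho <= e.
  by rewrite -ler_pdivlMr //; lra.
exists x; split => //; have := normv_ge0 normN x; nra.
Qed.

Lemma exists_solution_in_ball (R : realType) (n : nat) (N : 'cV[R]_n -> R)
    (g : 'cV[R]_n -> 'cV[R]_n) (Dg : 'cV[R]_n -> 'M[R]_n) (y : 'cV[R]_n)
    (rho mu : R) :
  is_vnorm N -> 0 < rho -> 0 < mu -> g 0 = 0 ->
  (forall x, N x <= rho -> has_deriv N g x (Dg x)) ->
  (forall x, N x <= rho ->
     Dg x \in unitmx /\ opnorm N (invmx (Dg x)) <= 1 / mu) ->
  N y < mu * rho ->
  exists x, g x = y /\ N x <= N y / mu.
Proof.
move=> normN rho0 mu0 g0 gD Dg_inv y_rho.
pose B := [set x | N x <= rho].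
(* [H] vanishes exactly at the solutions sought, and [exists_solution_approx]
   makes its infimum over [B] zero. *)
pose H x := N (g x - y) + Num.max 0 (mu * N x - N y).
have H_cont : {within B, continuous H}.
  apply: (continuous_within_residual normN
    (k := fun s => Num.max 0 (mu * s - N y))) => [x Bx|s].
    by have := has_deriv_continuous normN (gD x Bx); apply.
  apply: (@continuous_max _ _ (fun=> 0) (fun s => mu * s - N y)).
    exact: cst_continuous.
  by apply: continuousB; [apply: mulrl_continuous | apply: cst_continuous].
have H_approx e : 0 < e -> exists2 x, B x & H x <= e.
  move=> e0; have [x [gx x_rho mux]] :=
    exists_solution_approx normN rho0 g0 gD Dg_inv y_rho e0.
  exists x => //; rewrite /H gx subrr normv0 // add0r ge_max.
  by apply/andP; split; lra.
have [x Bx Hx] :=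
  compact_approx_le0 (compact_normv_ball normN (r := rho)) H_cont H_approx.
have [res_le0 gap_le0] : N (g x - y) <= 0 /\ mu * N x - N y <= 0.
  have := normv_ge0 normN (g x - y).
  have : 0 <= Num.max 0 (mu * N x - N y) by rewrite le_max lexx.
  have : mu * N x - N y <= Num.max 0 (mu * N x - N y) by rewrite le_max lexx orbT.
  by rewrite /H in Hx; split; lra.
exists x; split; last by rewrite ler_pdivlMr // mulrC; lra.
apply/eqP; rewrite -subr_eq0; apply/eqP/(normv_eq0 normN)/le_anti.
by rewrite res_le0 normv_ge0.
Qed.

Theorem corollary2 (R : realType) (n : nat) (N : 'cV[R]_n -> R)
  (g : 'cV[R]_n -> 'cV[R]_n) (Dg : 'cV[R]_n -> 'M[R]_n) (y : 'cV[R]_n)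
  (rho L mu : R) :
  is_vnorm N -> 0 < rho -> 0 <= L -> 0 < mu ->
  g 0 = 0 ->
  (forall x, N x <= rho -> has_deriv N g x (Dg x)) ->
  (forall xa xb, N xa <= rho -> N xb <= rho ->
     opnorm N (Dg xa - Dg xb) <= L * N (xa - xb)) ->
  (forall x, N x <= rho ->
     Dg x \in unitmx /\ opnorm N (invmx (Dg x)) <= 1 / mu) ->
  N y < mu * rho ->
  exists xs : 'cV[R]_n, g xs = y /\ N xs <= N y / mu.
Proof.
move=> normN rho0 _ mu0 g0 gD _ Dg_inv y_rho.
exact: exists_solution_in_ball normN rho0 mu0 g0 gD Dg_inv y_rho.
Qed.
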